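(* Let $V$ be a finite ground set with $n=|V|$, let $f:2^V\to\mathbb{R}_{\ge 0}$ be monotone submodular, let $k\ge1$ and $t\ge 1$ be integers, and let $OPT=\max_{A\subseteq V,|A|\le k} f(A)$. For $1\le\ell\le t$ let $\alpha_\ell=\left(1-\frac{1}{t+1}\right)^\ell\frac{OPT}{k}$. Run the following randomized procedure (Algorithm 2): set $G=\emptyset$; for $\ell=1,\dots,t$: (i) draw a fresh random set $S\subseteq V$ containing each element independently with probability $p=4\sqrt{k/n}$, and partition $V$ at random into sets $V_1,\dots,V_m$; (ii) compute $G_0=\textsc{ThresholdGreedy}(S,G,\alpha_\ell)$; (iii) for each $i$, set $R_i=\textsc{ThresholdFilter}(V_i,G_0,\alpha_\ell)$ if $|G_0|<k$ and $R_i=\emptyset$ otherwise; (iv) set $G=\textsc{ThresholdGreedy}\big(\bigcup_i R_i,\,G_0,\,\alpha_\ell\big)$. Output $G$. Then the approximation ratio of this algorithm is at least $1-\left(1-\frac{1}{t+1}\right)^t$; namely, for every outcome of the random choices, $f(G)\ge\left(1-\left(1-\frac{1}{t+1}\right)^t\right)OPT$.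
   Context: A function $f:2^V\to\mathbb{R}_{\ge0}$ is submodular if $f(A\cup\{e\})-f(A)\ge f(B\cup\{e\})-f(B)$ for all $A\subseteq B\subseteq V$ and $e\notin B$, and monotone if $f(A\cup\{e\})-f(A)\ge 0$ for all $A$ and $e\notin A$. For $A\subseteq V$, $e\in V$ write $f_A(e)=f(A\cup\{e\})-f(A)$. Fix a total order on $V$; all sets are scanned in this order. $\textsc{ThresholdGreedy}(T,G,\tau)$ (for $|G|\le k$): start with $G'=G$; scan $e\in T$ in the fixed order, and whenever $f_{G'}(e)\ge\tau$ and $|G'|<k$, add $e$ to $G'$; return $G'$. $\textsc{ThresholdFilter}(T,G,\tau)$ returns $\{e\in T: f_G(e)\ge\tau\}$. Here $m$ is the number of machines (the paper takes $m=\sqrt{n/k}$). *)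

From mathcomp Require Import all_boot all_order all_algebra.
Set Implicit Arguments. Unset Strict Implicit. Unset Printing Implicit Defensive.
Import Order.TTheory GRing.Theory Num.Theory.
Local Open Scope ring_scope.

Section Defs.
Variables (R : realFieldType) (V : finType).
Implicit Types (f : {set V} -> R) (A B G : {set V}).

Definition marg f A (e : V) : R := f (e |: A) - f A.

Definition nonneg_fun f := forall A, 0 <= f A.
Definition monotone f := forall A (e : V), e \notin A -> 0 <= marg f A e.
Definition submodular f :=
  forall A B (e : V), A \subset B -> e \notin B -> marg f B e <= marg f A e.

(* OPT = max_{|A| <= k} f A  (f is nonnegative, so the seed 0 is harmless) *)
Definition OPT f (k : nat) : R := \big[Num.max/0]_(A : {set V} | (#|A| <= k)%N) f A.

(* [sigma] is the fixed total order on V: a duplicate-free enumeration of V.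
   A set T is scanned as the subsequence of sigma of elements of T. *)
Definition scan (sigma : seq V) (T : {set V}) : seq V := [seq e <- sigma | e \in T].

Definition ThresholdGreedy f (k : nat) (sigma : seq V) (T G : {set V}) (tau : R)
  : {set V} :=
  foldl (fun G' e => if (tau <= marg f G' e) && (#|G'| < k)%N then e |: G' else G')
        G (scan sigma T).

Definition ThresholdFilter f (T G : {set V}) (tau : R) : {set V} :=
  [set e in T | tau <= marg f G e].

Definition alpha f (k t l : nat) : R :=
  (1 - (t.+1%:R)^-1) ^+ l * OPT f k / k%:R.

Definition round f (k t : nat) (sigma : seq V) (m : nat) (l : nat)
  (S : {set V}) (part : V -> 'I_m) (G : {set V}) : {set V} :=
  let a := alpha f k t l in
  let G0 := ThresholdGreedy f k sigma S G a in
  let Rs := fun i : 'I_m =>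
    if (#|G0| < k)%N then ThresholdFilter f [set v | part v == i] G0 a else set0 in
  ThresholdGreedy f k sigma (\bigcup_(i < m) Rs i) G0 a.

(* Run rounds 1..l; S l and part l are the random outcomes of round l. *)
Fixpoint algo2 f (k t : nat) (sigma : seq V) (m : nat)
  (S : nat -> {set V}) (part : nat -> V -> 'I_m) (l : nat) : {set V} :=
  match l with
  | 0 => set0
  | l'.+1 => round f k t sigma l'.+1 (S l'.+1) (part l'.+1)
               (algo2 f k t sigma S part l')
  end.

End Defs.

(* Write b = 1 - 1/(t+1), so that alpha_l = b^l OPT / k.  Every element added
   in round l has marginal gain at least alpha_l, so f(G) - |G| alpha_l never
   decreases during round l.  If round l ends with |G| < k, every element has
   marginal gain at most alpha_l with respect to G, hence by submodularity
   OPT <= f(G) + k alpha_l, i.e. f(G) >= (1 - b^l) OPT.  These two facts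
   propagate the invariant
     f(G_l) >= (1 - b^l) OPT + (|G_l|/k - l/t) b^l OPT,
   which for l = t and |G_t| = k is the claim; if |G_t| < k the claim is the
   second fact for l = t. *)

From mathcomp Require Import all_boot all_order all_algebra.
From mathcomp Require Import lra zify ring.
Set Implicit Arguments. Unset Strict Implicit. Unset Printing Implicit Defensive.
Import Order.TTheory GRing.Theory Num.Theory.
Local Open Scope ring_scope.

Lemma finset_ind (T : finType) (P : {set T} -> Prop) :
  P set0 -> (forall (x : T) (A : {set T}), x \notin A -> P A -> P (x |: A)) ->
  forall A, P A.
Proof.
move=> P0 PU A; move cardA : #|A| => n; elim: n A cardA => [|n IH] A cardA.
  by move/eqP: cardA; rewrite cards_eq0 => /eqP ->.
have /card_gt0P [x xA] : (0 < #|A|)%N by rewrite cardA.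
rewrite -(setD1K xA); apply: PU; first by rewrite !inE eqxx.
by apply: IH; move: cardA; rewrite (cardsD1 x A) xA => -[].
Qed.

Section Marginals.
Variables (R : realFieldType) (V : finType) (f : {set V} -> R).
Implicit Types (A B G : {set V}) (e : V).

Lemma marg_mem A e : e \in A -> marg f A e = 0.
Proof. by move=> eA; rewrite /marg (setUidPr _) ?sub1set // subrr. Qed.

Hypotheses (f_mono : monotone f) (f_sub : submodular f).

Lemma marg_ge0 A e : 0 <= marg f A e.
Proof. by case: (boolP (e \in A)) => [/marg_mem -> | /f_mono]. Qed.

Lemma marg_le_subset A B e : A \subset B -> marg f B e <= marg f A e.
Proof.
move=> sAB; case: (boolP (e \in B)) => [/marg_mem -> | eB]; last exact: f_sub.
exact: marg_ge0.
Qed.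

Lemma le_setU A B : f A <= f (A :|: B).
Proof.
elim/finset_ind: B => [|x B _ IH]; first by rewrite setU0.
by rewrite setUCA; apply: le_trans IH _; rewrite -subr_ge0; apply: marg_ge0.
Qed.

Lemma le_setU_marg G A (a : R) :
  (forall e, marg f G e <= a) -> f (G :|: A) <= f G + #|A|%:R * a.
Proof.
move=> margG; elim/finset_ind: A => [|x A xA IH]; first by rewrite setU0 cards0 mul0r addr0.
rewrite setUCA cardsU1 xA -natr1 mulrDl mul1r addrA.
have : marg f (G :|: A) x <= a by apply: le_trans (margG x); apply/marg_le_subset/subsetUl.
by rewrite /marg; lra.
Qed.

Hypothesis f_ge0 : nonneg_fun f.

Lemma OPT_le_marg (k : nat) G (a : R) :
  0 <= a -> (forall e, marg f G e <= a) -> OPT f k <= f G + k%:R * a.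
Proof.
move=> a_ge0 margG; apply: bigmax_le => [|A cardA].
  by rewrite addr_ge0 ?mulr_ge0.
apply: le_trans (le_setU A G) _; rewrite setUC.
apply: le_trans (le_setU_marg A margG) _.
by rewrite lerD2l ler_wpM2r // ler_nat.
Qed.

End Marginals.

Section ThresholdGreedyScan.
Variables (R : realFieldType) (V : finType) (f : {set V} -> R) (k : nat) (tau : R).
Implicit Types (G T : {set V}) (e : V) (s : seq V).

Definition threshold_step (G : {set V}) (e : V) : {set V} :=
  if (tau <= marg f G e) && (#|G| < k)%N then e |: G else G.

Local Notation greedy := (foldl threshold_step).

Lemma ThresholdGreedyE sigma T G :
  ThresholdGreedy f k sigma T G tau = greedy G (scan sigma T).
Proof. by []. Qed.

Lemma threshold_step_sub G e : G \subset threshold_step G e.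
Proof. by rewrite /threshold_step; case: ifP => // _; apply: subsetUr. Qed.

Lemma greedy_sub s G : G \subset greedy G s.
Proof.
elim: s G => [|e s IH] G /=; first exact: subxx.
exact: subset_trans (threshold_step_sub G e) (IH _).
Qed.

Lemma card_greedy s G : (#|G| <= k)%N -> (#|greedy G s| <= k)%N.
Proof.
elim: s G => [|e s IH] G //= cardG; apply: IH; rewrite /threshold_step.
by case: ifP => // /andP[_ ltGk]; rewrite cardsU1; case: (e \in G) => /=; lia.
Qed.

Lemma greedy_potential s G :
  f G - #|G|%:R * tau <= f (greedy G s) - #|greedy G s|%:R * tau.
Proof.
elim: s G => [|e s IH] G //=; apply: le_trans (IH _); rewrite /threshold_step.
case: ifP => // /andP[gain _].
case eG: (e \in G); first by rewrite (setUidPr _) // sub1set.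
by rewrite cardsU1 eG /= natrD; move: gain; rewrite /marg; lra.
Qed.

Lemma greedy_rejected s G e : submodular f ->
  (#|greedy G s| < k)%N -> e \in s -> e \in greedy G s \/ marg f (greedy G s) e < tau.
Proof.
move=> f_sub; elim: s G => [|x s IH] G //= ltk; rewrite inE => /orP[/eqP -> | es].
  set G1 := threshold_step G x.
  have sG1 := greedy_sub s G1.
  case xG: (x \in greedy G1 s); [by left | right].
  have sG := subset_trans (threshold_step_sub G x) sG1.
  have ltGk : (#|G| < k)%N by apply: leq_ltn_trans ltk; apply: subset_leq_card.
  have : marg f G x < tau.
    rewrite ltNge; apply/negP => gain; move/negbT: xG; apply/negP; rewrite negbK.
    by apply: (subsetP sG1); rewrite /G1 /threshold_step gain ltGk setU11.
  by apply: le_lt_trans; apply: f_sub; rewrite ?xG.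
exact: IH.
Qed.

End ThresholdGreedyScan.

Lemma mem_scan (V : finType) (sigma : seq V) (T : {set V}) (e : V) :
  e \in sigma -> (e \in scan sigma T) = (e \in T).
Proof. by move=> e_sigma; rewrite mem_filter e_sigma andbT. Qed.

Section Rounds.
Variables (R : realFieldType) (V : finType) (f : {set V} -> R).
Variables (k t : nat) (sigma : seq V) (m l : nat) (S : {set V}) (part : V -> 'I_m).
Implicit Type G : {set V}.

Local Notation round := (round f k t sigma l S part).
Local Notation a := (alpha f k t l).

Lemma card_round G : (#|G| <= k)%N -> (#|round G| <= k)%N.
Proof. by move=> cardG; rewrite /round !ThresholdGreedyE; do 2 apply: card_greedy. Qed.

Lemma round_potential G : f G - #|G|%:R * a <= f (round G) - #|round G|%:R * a.
Proof.
rewrite /round !ThresholdGreedyE.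
by apply: le_trans (greedy_potential f k _ _ G) _; apply: greedy_potential.
Qed.

Lemma round_marg_le G : monotone f -> submodular f -> (forall v, v \in sigma) ->
  0 <= a -> (#|round G| < k)%N -> forall e, marg f (round G) e <= a.
Proof.
move=> f_mono f_sub sigma_total a_ge0; rewrite /round !ThresholdGreedyE.
set G0 := foldl _ G _; set U := \bigcup_(i < m) _; set G1 := foldl _ G0 _.
move=> ltk e.
have ltG0k : (#|G0| < k)%N by apply: leq_ltn_trans ltk; apply/subset_leq_card/greedy_sub.
have [eU | eNU] := boolP (e \in U).
  have e_scan : e \in scan sigma U by rewrite mem_scan.
  by case: (greedy_rejected f_sub ltk e_scan) => [/(marg_mem f) -> | /ltW].
have : marg f G0 e < a.
  rewrite ltNge; apply: contra eNU => gain.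
  by apply/bigcupP; exists (part e) => //; rewrite ltG0k !inE eqxx gain.
by move/ltW; apply: le_trans; apply/marg_le_subset/greedy_sub.
Qed.

End Rounds.

Lemma OPT_ge0 (R : realFieldType) (V : finType) (f : {set V} -> R) k : 0 <= OPT f k.
Proof. by rewrite /OPT; elim/big_rec: _ => // A x _ x_ge0; rewrite le_max x_ge0 orbT. Qed.

Lemma ratio_ge0 (R : realFieldType) (t : nat) : 0 <= 1 - (t.+1%:R)^-1 :> R.
Proof. by rewrite subr_ge0 invf_le1 ?ltr0n // ler1n. Qed.

Lemma alpha_ge0 (R : realFieldType) (V : finType) (f : {set V} -> R) k t l :
  0 <= alpha f k t l.
Proof. by rewrite /alpha !mulr_ge0 ?exprn_ge0 ?ratio_ge0 ?OPT_ge0 ?invr_ge0. Qed.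

Lemma mulr_alpha (R : realFieldType) (V : finType) (f : {set V} -> R) k t l :
  (0 < k)%N -> k%:R * alpha f k t l = (1 - (t.+1%:R)^-1) ^+ l * OPT f k.
Proof. by move=> k_gt0; rewrite /alpha mulrC divfK // pnatr_eq0 -lt0n. Qed.

Section LowerBound.
Variables (R : realFieldType) (T K O : R).

Definition lower_bound (beta L x : R) : R := (1 - beta) * O + (x / K - L / T) * beta * O.

Hypotheses (K_gt0 : 0 < K) (O_ge0 : 0 <= O).

Let b := 1 - (T + 1)^-1.

Lemma lower_bound_step (beta L x x' F F' : R) :
  0 <= beta -> 0 <= L -> L + 1 <= T ->
  F' - x' * (beta * b * O / K) <= F - x * (beta * b * O / K) ->
  lower_bound beta L x' <= F' -> (x' < K -> (1 - beta) * O <= F') ->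
  lower_bound (beta * b) (L + 1) x <= F.
Proof.
move=> beta_ge0 L_ge0 LT potential lbF' unsaturated.
have T_gt0 : 0 < T by lra.
have [T1_neq0 T_neq0 K_neq0] : [/\ T + 1 != 0, T != 0 & K != 0].
  by split; rewrite lt0r_neq0 //; lra.
have c_ge0 : 0 <= beta * O / (T + 1) by rewrite !mulr_ge0 // invr_ge0; lra.
(* If the previous set is ahead of schedule (x'/K >= L/T) the potential alone
   suffices; otherwise it is unsaturated and its bound (1 - beta) O takes over. *)
have [ahead | behind] := lerP (L / T) (x' / K).
  have gap : lower_bound beta L x' + (x - x') * (beta * b * O / K)
      - lower_bound (beta * b) (L + 1) x = beta * O / (T + 1) * (x' / K - L / T).
    by rewrite /lower_bound /b; field; apply/and3P.
  have : 0 <= beta * O / (T + 1) * (x' / K - L / T) by rewrite mulr_ge0 // subr_ge0.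
  by rewrite -gap; lra.
have /unsaturated unsat : x' < K.
  have : x' / K < 1 by rewrite (lt_le_trans behind) // ler_pdivrMr // mul1r; lra.
  by rewrite ltr_pdivrMr // mul1r.
have gap : (1 - beta) * O + (x - x') * (beta * b * O / K)
    - lower_bound (beta * b) (L + 1) x = beta * O / (T + 1) * T * (L / T - x' / K).
  by rewrite /lower_bound /b; field; apply/and3P.
have : 0 <= beta * O / (T + 1) * T * (L / T - x' / K).
  by apply: mulr_ge0; [rewrite mulr_ge0 // ltW | rewrite subr_ge0 ltW].
by rewrite -gap; lra.
Qed.

End LowerBound.

Section Algorithm2.
Variables (R : realFieldType) (V : finType) (f : {set V} -> R).
Variables (k t : nat) (sigma : seq V) (m : nat).
Variables (S : nat -> {set V}) (part : nat -> V -> 'I_m).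
Hypotheses (f_ge0 : nonneg_fun f) (f_mono : monotone f) (f_sub : submodular f).
Hypotheses (k_gt0 : (0 < k)%N) (sigma_total : forall v : V, v \in sigma).

Local Notation G := (algo2 f k t sigma S part).
Local Notation b := (1 - (t.+1%:R)^-1).
Local Notation O := (OPT f k).

Lemma card_algo2 l : (#|G l| <= k)%N.
Proof. by elim: l => [|l IH]; rewrite ?cards0 // card_round. Qed.

Lemma algo2_unsaturated l : (#|G l| < k)%N -> (1 - b ^+ l) * O <= f (G l).
Proof.
case: l => [_ | l ltk]; first by rewrite expr0 subrr mul0r.
have := OPT_le_marg f_mono f_sub f_ge0 k (alpha_ge0 f k t l.+1).
move=> /(_ _ (round_marg_le f_mono f_sub sigma_total (alpha_ge0 _ _ _ _) ltk)).
by rewrite mulr_alpha //; lra.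
Qed.

Lemma algo2_lower_bound l : (l <= t)%N ->
  lower_bound t%:R k%:R O (b ^+ l) l%:R #|G l|%:R <= f (G l).
Proof.
elim: l => [_ | l IH lt_lt].
  by rewrite /lower_bound expr0 cards0 subrr !mul0r subrr !mul0r add0r.
have k_pos : 0 < k%:R :> R by rewrite ltr0n.
have := lower_bound_step (T := t%:R) k_pos (OPT_ge0 f k) (beta := b ^+ l) (L := l%:R)
  (x' := #|G l|%:R) (F' := f (G l)).
rewrite !natr1 -exprSr; apply.
- exact/exprn_ge0/ratio_ge0.
- exact: ler0n.
- by rewrite ler_nat.
- by have := round_potential f k t sigma l.+1 (S l.+1) (part l.+1) (G l); rewrite /alpha.
- exact: IH (ltnW lt_lt).
- by rewrite ltr_nat; apply: algo2_unsaturated.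
Qed.

End Algorithm2.

Theorem lemma3 (R : realFieldType) (V : finType) (f : {set V} -> R)
  (k t : nat) (sigma : seq V) (m : nat)
  (S : nat -> {set V}) (part : nat -> V -> 'I_m) :
  nonneg_fun f -> monotone f -> submodular f ->
  (1 <= k)%N -> (1 <= t)%N ->
  uniq sigma -> (forall v : V, v \in sigma) ->
  (1 - (1 - (t.+1%:R)^-1) ^+ t) * OPT f k <= f (algo2 f k t sigma S part t).
Proof.
move=> f_ge0 f_mono f_sub k_gt0 t_gt0 _ sigma_total.
have [ltk | gek] := ltnP #|algo2 f k t sigma S part t| k.
  exact: algo2_unsaturated.
have cardG : #|algo2 f k t sigma S part t| = k.
  by apply/eqP; rewrite eqn_leq gek card_algo2.
have := algo2_lower_bound S part f_ge0 f_mono f_sub k_gt0 sigma_total (leqnn t).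
by rewrite /lower_bound cardG !divff ?pnatr_eq0 -?lt0n // subrr !mul0r addr0.
Qed.
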